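(* Let $G_1=(V_1,E_1)$ and $G_2=(V_2,E_2)$ be finite simple directed graphs with real costs $c(i\to k)$, $c(ij\to kl)$, $c(i\to\epsilon)$, $c(ij\to\epsilon)$, $c(\epsilon\to k)$, $c(\epsilon\to kl)$ for $i\in V_1$, $k\in V_2$, $ij\in E_1$, $kl\in E_2$. Define program (F1): minimize $$\sum_{i\in V_1}\sum_{k\in V_2}c(i\to k)x_{i,k}+\sum_{ij\in E_1}\sum_{kl\in E_2}c(ij\to kl)y_{ij,kl}+\sum_{i\in V_1}c(i\to\epsilon)u_i+\sum_{k\in V_2}c(\epsilon\to k)v_k+\sum_{ij\in E_1}c(ij\to\epsilon)e_{ij}+\sum_{kl\in E_2}c(\epsilon\to kl)f_{kl}$$ over binary $\mathbf{x},\mathbf{y},\mathbf{u},\mathbf{v},\mathbf{e},\mathbf{f}$ subject to: $u_i+\sum_{k\in V_2}x_{i,k}=1$ ($\forall i\in V_1$); $v_k+\sum_{i\in V_1}x_{i,k}=1$ ($\forall k\in V_2$); $e_{ij}+\sum_{kl\in E_2}y_{ij,kl}=1$ ($\forall ij\in E_1$); $f_{kl}+\sum_{ij\in E_1}y_{ij,kl}=1$ ($\forall kl\in E_2$); $y_{ij,kl}\le x_{i,k}$ and $y_{ij,kl}\le x_{j,l}$ ($\forall (ij,kl)\in E_1\times E_2$). Define program (F2): minimize $$\sum_{i\in V_1}\sum_{k\in V_2}\bigl(c(i\to k)-c(i\to\epsilon)-c(\epsilon\to k)\bigr)x_{i,k}+\sum_{ij\in E_1}\sum_{kl\in E_2}\bigl(c(ij\to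 kl)-c(ij\to\epsilon)-c(\epsilon\to kl)\bigr)y_{ij,kl}+C,$$ with $C=\sum_{i\in V_1}c(i\to\epsilon)+\sum_{k\in V_2}c(\epsilon\to k)+\sum_{ij\in E_1}c(ij\to\epsilon)+\sum_{kl\in E_2}c(\epsilon\to kl)$, over binary $\mathbf{x},\mathbf{y}$ subject to: $\sum_{k\in V_2}x_{i,k}\le1$ ($\forall i\in V_1$); $\sum_{i\in V_1}x_{i,k}\le 1$ ($\forall k\in V_2$); $\sum_{l\in V_2:\,kl\in E_2}y_{ij,kl}\le x_{i,k}$ ($\forall k\in V_2,\ \forall ij\in E_1$); $\sum_{k\in V_2:\,kl\in E_2}y_{ij,kl}\le x_{j,l}$ ($\forall l\in V_2,\ \forall ij\in E_1$). Then the map $(\mathbf{x},\mathbf{y},\mathbf{u},\mathbf{v},\mathbf{e},\mathbf{f})\mapsto(\mathbf{x},\mathbf{y})$ is a bijection from the feasible set of (F1) onto the feasible set of (F2), it preserves the objective value, and consequently (F1) and (F2) have the same optimal value.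
   Context: All variables $x_{i,k},y_{ij,kl},u_i,v_k,e_{ij},f_{kl}$ take values in $\{0,1\}$. Edges of a simple directed graph are ordered pairs of distinct vertices, written $ij$ for $(i,j)$. The optimal value of (F1) is the graph edit distance between $G_1$ and $G_2$ under the given costs. *)

From HB Require Import structures.
From mathcomp Require Import all_boot all_order all_algebra.
Set Implicit Arguments. Unset Strict Implicit. Unset Printing Implicit Defensive.
Import Order.TTheory GRing.Theory Num.Theory.

Notation edge E := {p | p \in (E : {set _})}.

Definition loopless (V : finType) (E : {set V * V}) : Prop :=
  forall i : V, (i, i) \notin E.

(* Binary variables are booleans (true = 1, false = 0); constraints are
   stated in nat via the bool >-> nat coercion. *)

Definition F1_feasible (V1 V2 : finType) (E1 : {set V1 * V1}) (E2 : {set V2 * V2})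
  (x : {ffun V1 * V2 -> bool}) (y : {ffun edge E1 * edge E2 -> bool})
  (u : {ffun V1 -> bool}) (v : {ffun V2 -> bool})
  (e : {ffun edge E1 -> bool}) (f : {ffun edge E2 -> bool}) : Prop :=
  [/\ (forall i : V1, u i + \sum_(k : V2) x (i, k) = 1)%N,
      (forall k : V2, v k + \sum_(i : V1) x (i, k) = 1)%N,
      (forall a : edge E1, e a + \sum_(b : edge E2) y (a, b) = 1)%N,
      (forall b : edge E2, f b + \sum_(a : edge E1) y (a, b) = 1)%N &
      (forall (a : edge E1) (b : edge E2),
          (y (a, b) <= x ((val a).1, (val b).1))%N /\
          (y (a, b) <= x ((val a).2, (val b).2))%N)].

Definition F1_obj (R : realFieldType) (V1 V2 : finType)
  (E1 : {set V1 * V1}) (E2 : {set V2 * V2})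
  (cV : V1 -> V2 -> R) (cE : edge E1 -> edge E2 -> R)
  (cVdel : V1 -> R) (cVins : V2 -> R)
  (cEdel : edge E1 -> R) (cEins : edge E2 -> R)
  (x : {ffun V1 * V2 -> bool}) (y : {ffun edge E1 * edge E2 -> bool})
  (u : {ffun V1 -> bool}) (v : {ffun V2 -> bool})
  (e : {ffun edge E1 -> bool}) (f : {ffun edge E2 -> bool}) : R :=
  (\sum_(i : V1) \sum_(k : V2) cV i k * (x (i, k))%:R
   + \sum_(a : edge E1) \sum_(b : edge E2) cE a b * (y (a, b))%:R
   + \sum_(i : V1) cVdel i * (u i)%:R
   + \sum_(k : V2) cVins k * (v k)%:R
   + \sum_(a : edge E1) cEdel a * (e a)%:R
   + \sum_(b : edge E2) cEins b * (f b)%:R)%R.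

Definition F2_feasible (V1 V2 : finType) (E1 : {set V1 * V1}) (E2 : {set V2 * V2})
  (x : {ffun V1 * V2 -> bool}) (y : {ffun edge E1 * edge E2 -> bool}) : Prop :=
  [/\ (forall i : V1, \sum_(k : V2) x (i, k) <= 1)%N,
      (forall k : V2, \sum_(i : V1) x (i, k) <= 1)%N,
      (forall (k : V2) (a : edge E1),
          \sum_(b : edge E2 | (val b).1 == k) y (a, b) <= x ((val a).1, k))%N &
      (forall (l : V2) (a : edge E1),
          \sum_(b : edge E2 | (val b).2 == l) y (a, b) <= x ((val a).2, l))%N].

Definition F2_obj (R : realFieldType) (V1 V2 : finType)
  (E1 : {set V1 * V1}) (E2 : {set V2 * V2})
  (cV : V1 -> V2 -> R) (cE : edge E1 -> edge E2 -> R)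
  (cVdel : V1 -> R) (cVins : V2 -> R)
  (cEdel : edge E1 -> R) (cEins : edge E2 -> R)
  (x : {ffun V1 * V2 -> bool}) (y : {ffun edge E1 * edge E2 -> bool}) : R :=
  (\sum_(i : V1) \sum_(k : V2) (cV i k - cVdel i - cVins k) * (x (i, k))%:R
   + \sum_(a : edge E1) \sum_(b : edge E2) (cE a b - cEdel a - cEins b) * (y (a, b))%:R
   + (\sum_(i : V1) cVdel i + \sum_(k : V2) cVins k
      + \sum_(a : edge E1) cEdel a + \sum_(b : edge E2) cEins b))%R.

Definition F1_optimal_value (R : realFieldType) (V1 V2 : finType)
  (E1 : {set V1 * V1}) (E2 : {set V2 * V2})
  (cV : V1 -> V2 -> R) (cE : edge E1 -> edge E2 -> R)
  (cVdel : V1 -> R) (cVins : V2 -> R)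
  (cEdel : edge E1 -> R) (cEins : edge E2 -> R) (r : R) : Prop :=
  (exists x y u v e f, F1_feasible x y u v e f /\
     F1_obj cV cE cVdel cVins cEdel cEins x y u v e f = r) /\
  (forall x y u v e f, F1_feasible x y u v e f ->
     (r <= F1_obj cV cE cVdel cVins cEdel cEins x y u v e f)%R).

Definition F2_optimal_value (R : realFieldType) (V1 V2 : finType)
  (E1 : {set V1 * V1}) (E2 : {set V2 * V2})
  (cV : V1 -> V2 -> R) (cE : edge E1 -> edge E2 -> R)
  (cVdel : V1 -> R) (cVins : V2 -> R)
  (cEdel : edge E1 -> R) (cEins : edge E2 -> R) (r : R) : Prop :=
  (exists x y, F2_feasible x y /\
     F2_obj cV cE cVdel cVins cEdel cEins x y = r) /\
  (forall x y, F2_feasible x y ->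
     (r <= F2_obj cV cE cVdel cVins cEdel cEins x y)%R).

From HB Require Import structures.
From mathcomp Require Import all_boot all_order all_algebra.
From mathcomp Require Import ring.
Import Order.TTheory GRing.Theory Num.Theory.
Set Implicit Arguments. Unset Strict Implicit.

(* The slack variables u, v, e, f of (F1) are determined by x and y: each is
   the complement of a 0/1 sum, and the equality constraints of (F1) hold iff
   these sums are at most 1.  For the row and column sums of x this is what
   (F2) imposes.  For the edges the bound is derived: grouping the images of
   ij by their source k bounds their number by the row sum of x at i, and kl
   is the image of at most one edge ij because x is injective on columns, so
   i and j are determined by k and l.  Substituting u = 1 - sum x, etc. into
   the objective of (F1) gives the objective of (F2). *)

Lemma sum_boolE (I : finType) (F : I -> bool) : (\sum_i F i)%N = #|F|.
Proof.
by rewrite -sum1_card [RHS]big_mkcond; apply: eq_bigr => i _; rewrite unfold_in; case: (F i).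
Qed.

Lemma sum_bool_le1P (I : finType) (F : I -> bool) :
  reflect (forall a b, F a -> F b -> a = b) (\sum_i F i <= 1)%N.
Proof.
by rewrite sum_boolE; apply: (iffP card_le1_eqP) => uniqF a b Fa Fb; apply/esym/uniqF.
Qed.

Lemma addn_bool_eq1 (b : bool) (s : nat) :
  (b + s = 1)%N <-> (s <= 1)%N /\ b = (s == 0%N).
Proof.
split => [|[s_le1 ->]]; last by case: s s_le1 => [|[|]].
by case: b; case: s => [|[|]].
Qed.

Lemma sum_bool_cond_le (I : finType) (P : pred I) (F : I -> bool) (c : bool) :
  (\sum_i F i <= 1)%N -> (forall i, P i -> F i <= c)%N -> (\sum_(i | P i) F i <= c)%N.
Proof.
case: c => [sum_le1 _ | _ F_le0].
  by apply: leq_trans sum_le1; rewrite [leqRHS](bigID P) leq_addr.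
by rewrite leqn0 sum_nat_eq0; apply/forall_inP => i /F_le0; rewrite leqn0.
Qed.

Local Open Scope ring_scope.

Lemma natr_bool_compl (R : pzRingType) (b : bool) (s : nat) :
  (b + s = 1)%N -> (b%:R : R) = 1 - s%:R.
Proof.
move=> /(congr1 (fun n => n%:R : R)); rewrite /= natrD => sum_eq1.
by apply: (addIr (s%:R)); rewrite subrK.
Qed.

Section Slack.
Variables (R : pzRingType) (I J : finType).

Lemma sum_slack (c : I -> R) (s : {ffun I -> bool}) (w : I -> J -> bool) :
  (forall i, s i + \sum_j w i j = 1)%N ->
  \sum_i c i * (s i)%:R = \sum_i c i - \sum_i \sum_j c i * (w i j)%:R.
Proof.
move=> slack_eq; rewrite -sumrB; apply: eq_bigr => i _.
by rewrite (natr_bool_compl _ (slack_eq i)) natr_sum mulrBr mulr1 mulr_sumr.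
Qed.

Lemma sum_split_cost (a : I -> J -> R) (b : I -> R) (c : J -> R) (w : I -> J -> bool) :
  \sum_i \sum_j (a i j - b i - c j) * (w i j)%:R =
  \sum_i \sum_j a i j * (w i j)%:R - \sum_i \sum_j b i * (w i j)%:R
  - \sum_i \sum_j c j * (w i j)%:R.
Proof.
rewrite -!sumrB; apply: eq_bigr => i _; rewrite -!sumrB.
by apply: eq_bigr => j _; rewrite !mulrBl.
Qed.

End Slack.

Lemma sum_slack_col (R : pzRingType) (I J : finType)
    (c : J -> R) (s : {ffun J -> bool}) (w : I -> J -> bool) :
  (forall j, s j + \sum_i w i j = 1)%N ->
  \sum_j c j * (s j)%:R = \sum_j c j - \sum_i \sum_j c j * (w i j)%:R.
Proof. by move=> /(sum_slack c); rewrite [in RHS]exchange_big. Qed.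

Section Reformulation.
Variables (V1 V2 : finType) (E1 : {set V1 * V1}) (E2 : {set V2 * V2}).
Implicit Types (x : {ffun V1 * V2 -> bool}) (y : {ffun edge E1 * edge E2 -> bool}).
Implicit Types (u : {ffun V1 -> bool}) (v : {ffun V2 -> bool}).
Implicit Types (e : {ffun edge E1 -> bool}) (f : {ffun edge E2 -> bool}).

Lemma F2_feasible_edge_le x y :
  F2_feasible x y -> forall a b,
  (y (a, b) <= x ((val a).1, (val b).1))%N /\ (y (a, b) <= x ((val a).2, (val b).2))%N.
Proof.
case=> _ _ src_le tgt_le a b; split.
  by apply: leq_trans (src_le _ a); rewrite (bigD1 b) //= leq_addr.
by apply: leq_trans (tgt_le _ a); rewrite (bigD1 b) //= leq_addr.
Qed.

Lemma F2_feasible_out_le1 x y a :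
  F2_feasible x y -> (\sum_b y (a, b) <= 1)%N.
Proof.
case=> row_le1 _ src_le _.
rewrite (partition_big (fun b : edge E2 => (val b).1) predT) //=.
by apply: leq_trans (row_le1 (val a).1); apply: leq_sum => k _; apply: src_le.
Qed.

Lemma F2_feasible_in_le1 x y b :
  F2_feasible x y -> (\sum_a y (a, b) <= 1)%N.
Proof.
move=> feas; have [_ col_le1 _ _] := feas.
apply/sum_bool_le1P => a a' yab ya'b.
have [+ +] := F2_feasible_edge_le feas a b; rewrite yab !lt0b => xa1 xa2.
have [+ +] := F2_feasible_edge_le feas a' b; rewrite ya'b !lt0b => xa1' xa2'.
have eq_src := sum_bool_le1P _ (col_le1 (val b).1) _ _ xa1 xa1'.
have eq_tgt := sum_bool_le1P _ (col_le1 (val b).2) _ _ xa2 xa2'.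
by apply: val_inj; move: eq_src eq_tgt; case: (val a) (val a') => ? ? [? ?] /= -> ->.
Qed.

Lemma F1_feasible_F2 x y u v e f : F1_feasible x y u v e f -> F2_feasible x y.
Proof.
case=> u_eq v_eq e_eq _ y_le; split.
- by move=> i; rewrite -(u_eq i) leq_addl.
- by move=> k; rewrite -(v_eq k) leq_addl.
- move=> k a; apply: sum_bool_cond_le => [|b /eqP <-]; last by case: (y_le a b).
  by rewrite -(e_eq a) leq_addl.
- move=> l a; apply: sum_bool_cond_le => [|b /eqP <-]; last by case: (y_le a b).
  by rewrite -(e_eq a) leq_addl.
Qed.

Lemma F2_feasible_F1 x y :
  F2_feasible x y -> exists u v e f, F1_feasible x y u v e f.
Proof.
move=> feas; have [row_le1 col_le1 _ _] := feas.
exists [ffun i => (\sum_k x (i, k) == 0)%N], [ffun k => (\sum_i x (i, k) == 0)%N].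
exists [ffun a => (\sum_b y (a, b) == 0)%N], [ffun b => (\sum_a y (a, b) == 0)%N].
split; last exact: F2_feasible_edge_le.
- by move=> i; rewrite ffunE; apply/addn_bool_eq1.
- by move=> k; rewrite ffunE; apply/addn_bool_eq1.
- by move=> a; rewrite ffunE; apply/addn_bool_eq1; rewrite (F2_feasible_out_le1 a feas).
- by move=> b; rewrite ffunE; apply/addn_bool_eq1; rewrite (F2_feasible_in_le1 b feas).
Qed.

Lemma F1_feasible_slack_uniq x y u v e f u' v' e' f' :
  F1_feasible x y u v e f -> F1_feasible x y u' v' e' f' ->
  [/\ u = u', v = v', e = e' & f = f'].
Proof.
have slack_uniq (b b' : bool) s : (b + s = 1)%N -> (b' + s = 1)%N -> b = b'.
  by move=> /addn_bool_eq1[_ ->] /addn_bool_eq1[_ ->].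
case=> u_eq v_eq e_eq f_eq _ [u'_eq v'_eq e'_eq f'_eq _].
by split; apply/ffunP => z; apply: slack_uniq;
  [exact: u_eq | exact: u'_eq | exact: v_eq | exact: v'_eq
  | exact: e_eq | exact: e'_eq | exact: f_eq | exact: f'_eq].
Qed.

Variables (R : realFieldType) (cV : V1 -> V2 -> R) (cE : edge E1 -> edge E2 -> R).
Variables (cVdel : V1 -> R) (cVins : V2 -> R) (cEdel : edge E1 -> R) (cEins : edge E2 -> R).

Lemma F1_obj_F2 x y u v e f :
  F1_feasible x y u v e f ->
  F2_obj cV cE cVdel cVins cEdel cEins x y = F1_obj cV cE cVdel cVins cEdel cEins x y u v e f.
Proof.
case=> u_eq v_eq e_eq f_eq _; rewrite /F1_obj /F2_obj.
rewrite (sum_slack cVdel u_eq) (sum_slack_col cVins v_eq).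
rewrite (sum_slack cEdel e_eq) (sum_slack_col cEins f_eq) !sum_split_cost.
ring.
Qed.

Lemma F1_F2_optimal_value r :
  F1_optimal_value cV cE cVdel cVins cEdel cEins r <->
  F2_optimal_value cV cE cVdel cVins cEdel cEins r.
Proof.
split.
- case=> [[x [y [u [v [e [f [feas <-]]]]]]] opt]; split.
    by exists x, y; split; [exact: F1_feasible_F2 feas | rewrite (F1_obj_F2 feas)].
  move=> x' y' /F2_feasible_F1[u' [v' [e' [f' feas']]]].
  by rewrite (F1_obj_F2 feas'); apply: opt.
- case=> [[x [y [feas <-]]] opt]; split.
    have [u [v [e [f feas1]]]] := F2_feasible_F1 feas.
    by exists x, y, u, v, e, f; rewrite -(F1_obj_F2 feas1).
  move=> x' y' u v e f feas1; rewrite -(F1_obj_F2 feas1).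
  exact/opt/(F1_feasible_F2 feas1).
Qed.

End Reformulation.

Theorem mainTheorem4 (R : realFieldType) (V1 V2 : finType)
  (E1 : {set V1 * V1}) (E2 : {set V2 * V2})
  (G1simple : loopless E1) (G2simple : loopless E2)
  (cV : V1 -> V2 -> R) (cE : edge E1 -> edge E2 -> R)
  (cVdel : V1 -> R) (cVins : V2 -> R)
  (cEdel : edge E1 -> R) (cEins : edge E2 -> R) :
  (* the projection maps feasible solutions of (F1) to feasible ones of (F2) *)
  (forall (x : {ffun V1 * V2 -> bool}) (y : {ffun edge E1 * edge E2 -> bool})
     (u : {ffun V1 -> bool}) (v : {ffun V2 -> bool})
     (e : {ffun edge E1 -> bool}) (f : {ffun edge E2 -> bool}), F1_feasible x y u v e f -> F2_feasible x y) /\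
  (* it is injective on the feasible set of (F1) *)
  (forall (x : {ffun V1 * V2 -> bool}) (y : {ffun edge E1 * edge E2 -> bool})
     (u : {ffun V1 -> bool}) (v : {ffun V2 -> bool})
     (e : {ffun edge E1 -> bool}) (f : {ffun edge E2 -> bool})
     (u' : {ffun V1 -> bool}) (v' : {ffun V2 -> bool})
     (e' : {ffun edge E1 -> bool}) (f' : {ffun edge E2 -> bool}),
     F1_feasible x y u v e f -> F1_feasible x y u' v' e' f' ->
     [/\ u = u', v = v', e = e' & f = f']) /\
  (* it is onto the feasible set of (F2) *)
  (forall (x : {ffun V1 * V2 -> bool}) (y : {ffun edge E1 * edge E2 -> bool}), F2_feasible x y -> exists u v e f, F1_feasible x y u v e f) /\
  (* it preserves the objective value *)
  (forall (x : {ffun V1 * V2 -> bool}) (y : {ffun edge E1 * edge E2 -> bool})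
     (u : {ffun V1 -> bool}) (v : {ffun V2 -> bool})
     (e : {ffun edge E1 -> bool}) (f : {ffun edge E2 -> bool}), F1_feasible x y u v e f ->
     F2_obj cV cE cVdel cVins cEdel cEins x y
     = F1_obj cV cE cVdel cVins cEdel cEins x y u v e f) /\
  (* hence (F1) and (F2) have the same optimal value *)
  (forall r : R, F1_optimal_value cV cE cVdel cVins cEdel cEins r <->
                 F2_optimal_value cV cE cVdel cVins cEdel cEins r).
Proof.
split; first exact: F1_feasible_F2.
split; first exact: F1_feasible_slack_uniq.
split; first exact: F2_feasible_F1.
split; first exact: F1_obj_F2.
exact: F1_F2_optimal_value.
Qed.
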